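(* Let $0<a\le1$. Then: (1) $\Phi_2(\sigma_1,\sigma_2,a,1,1)>0$ for $\sigma_1>0$, $\sigma_2>1$, $\sigma_1+\sigma_2>2$. (2) If $z_2\in[-1,1)$, $z_2\ne0$, then $\Phi_2(\sigma_1,\sigma_2,a,1,z_2)>0$ for $\sigma_1>1$, $\sigma_2>0$. (3) If $z_1\in[-1,1)$, $z_1\ne0$, then $\Phi_2(\sigma_1,\sigma_2,a,z_1,1)>0$ for $\sigma_1>0$, $\sigma_2>1$. (4) If $z_1,z_2\in[-1,1)$, both nonzero, then $\Phi_2(\sigma_1,\sigma_2,a,z_1,z_2)>0$ for $\sigma_1>0$, $\sigma_2>0$.
   Context: For $0<a\le1$, $s_1,s_2\in\mathbb{C}$ and $z_1,z_2\in\mathbb{C}$ with $0<|z_1|,|z_2|\le1$, the Hurwitz–Lerch type Euler–Zagier double zeta function is $$\Phi_2(s_1,s_2,a,z_1,z_2):=\sum_{m=0}^\infty\frac{z_1^m}{(m+a)^{s_1}}\sum_{n=1}^\infty\frac{z_2^{n-1}}{(m+n+a)^{s_2}},$$ convergent absolutely for $\Re s_1>0$, $\Re s_2>1$, $\Re(s_1+s_2)>2$, and understood elsewhere via its meromorphic continuation to $\mathbb{C}^2$. *)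

From Stdlib Require Import Reals.
From Coquelicot Require Import Coquelicot.
Open Scope R_scope.

(* Real-parameter values of the Hurwitz-Lerch type Euler-Zagier double zeta
   function, given by the iterated series
     Phi_2(s1,s2,a,z1,z2) = sum_{m>=0} z1^m/(m+a)^s1 * sum_{n>=1} z2^(n-1)/(m+n+a)^s2.
   The inner index k corresponds to n = k+1. *)

Definition Phi2_inner_term (s2 a z2 : R) (m k : nat) : R :=
  z2 ^ k / Rpower (INR m + INR k + 1 + a) s2.

Definition Phi2_inner (s2 a z2 : R) (m : nat) : R :=
  Series (Phi2_inner_term s2 a z2 m).

Definition Phi2_outer_term (s1 s2 a z1 z2 : R) (m : nat) : R :=
  z1 ^ m / Rpower (INR m + a) s1 * Phi2_inner s2 a z2 m.

Definition Phi2 (s1 s2 a z1 z2 : R) : R :=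
  Series (Phi2_outer_term s1 s2 a z1 z2).

Definition Phi2_converges (s1 s2 a z1 z2 : R) : Prop :=
  (forall m : nat, ex_series (Phi2_inner_term s2 a z2 m)) /\
  ex_series (Phi2_outer_term s1 s2 a z1 z2).

(* For a nonincreasing null sequence c >= 0 and -1 <= z <= 1, the series sum z^k c_k
   converges and is at least c_0 - c_1: for z < 0 it is an alternating series, for z >= 0
   all its terms are nonnegative.  The inner sum of Phi2 is such a series in z2 with
   c_k = (m + k + 1 + a)^-s2, strictly decreasing, hence positive.  The difference of two
   consecutive inner sums is the series with coefficients c_k - c_(k+1), nonincreasing by
   convexity of t^-s2, hence the inner sums are nonincreasing in m.  So the outer weights
   (m + a)^-s1 * (inner sum) strictly decrease to 0 and the same bound, now in z1, makes
   Phi2 positive; at z1 = 1 their summability comes from comparison with p-series. *)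

From Stdlib Require Import Reals Lra Lia Psatz.
From Coquelicot Require Import Coquelicot.
Open Scope R_scope.

Lemma Rpower_pos (x s : R) : 0 < Rpower x s.
Proof. apply exp_pos. Qed.

Lemma Series_nonneg (u : nat -> R) :
  ex_series u -> (forall n, 0 <= u n) -> 0 <= Series u.
Proof.
  intros Hu Hpos.
  replace 0 with (Series (fun _ => 0 * 0)) by (rewrite Series_scal_l; ring).
  apply Series_le; auto. intros n; split; [lra | rewrite Rmult_0_l; apply Hpos].
Qed.

Lemma Series_ge_head (u : nat -> R) :
  ex_series u -> (forall n, 0 <= u n) -> u 0%nat <= Series u.
Proof.
  intros Hu Hpos. rewrite Series_incr_1 by exact Hu.
  enough (0 <= Series (fun k => u (S k))) by lra.
  apply Series_nonneg; [now apply (ex_series_incr_1 u) | intros; apply Hpos].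
Qed.

Lemma is_series_telescoping (u : nat -> R) (l : R) :
  is_lim_seq u l -> is_series (fun k => u k - u (S k)) (u 0%nat - l).
Proof.
  intros Hu.
  assert (Hsum : forall n, sum_n (fun k => u k - u (S k)) n = u 0%nat - u (S n)).
  { induction n as [|n IH]; [now rewrite sum_O | rewrite sum_Sn, IH; cbn; ring]. }
  change (is_lim_seq (sum_n (fun k => u k - u (S k))) (u 0%nat - l)).
  apply (is_lim_seq_ext (fun n => u 0%nat - u (S n))); [intros; now rewrite Hsum |].
  apply is_lim_seq_minus'; [apply is_lim_seq_const | now apply is_lim_seq_incr_1 in Hu].
Qed.

Definition inv_pow (b s : R) (n : nat) : R := / Rpower (INR n + b) s.

Lemma inv_pow_shift (b s : R) (n : nat) : inv_pow (b + 1) s n = inv_pow b s (S n).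
Proof. unfold inv_pow. rewrite S_INR. f_equal. f_equal. ring. Qed.

Lemma inv_pow_pos (b s : R) (n : nat) : 0 < inv_pow b s n.
Proof. apply Rinv_0_lt_compat, Rpower_pos. Qed.

Section InvPow.
Variables (b s : R).
Hypotheses (Hb : 0 < b) (Hs : 0 < s).

Let base_pos (n : nat) : 0 < INR n + b.
Proof. pose proof (pos_INR n). lra. Qed.

Lemma inv_pow_succ_lt (n : nat) : inv_pow b s (S n) < inv_pow b s n.
Proof.
  apply Rinv_lt_contravar; [apply Rmult_lt_0_compat; apply Rpower_pos |].
  apply Rlt_Rpower_l; [exact Hs |]. rewrite S_INR. split; [apply base_pos | lra].
Qed.

Lemma is_lim_seq_inv_pow : is_lim_seq (inv_pow b s) 0.
Proof.
  apply is_lim_seq_Reals. intros eps Heps.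
  destruct (INR_unbounded (Rpower (/ eps) (/ s))) as [N HN].
  exists N. intros n Hn. unfold R_dist. rewrite Rminus_0_r.
  rewrite Rabs_pos_eq by (left; apply inv_pow_pos).
  assert (HnN : INR N <= INR n) by (apply le_INR; lia).
  assert (Hlt : Rpower (Rpower (/ eps) (/ s)) s < Rpower (INR n + b) s).
  { apply Rlt_Rpower_l; [exact Hs |]. split; [apply Rpower_pos | lra]. }
  rewrite Rpower_mult, Rinv_l, Rpower_1 in Hlt by (try apply Rinv_0_lt_compat; lra).
  rewrite <- (Rinv_inv eps). apply Rinv_lt_contravar; [|exact Hlt].
  apply Rmult_lt_0_compat; [apply Rinv_0_lt_compat; lra | apply Rpower_pos].
Qed.

(* From x (x + 2) <= (x + 1)^2 and AM-GM. *)
Lemma inv_pow_convex (n : nat) :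
  inv_pow b s (S n) - inv_pow b s (S (S n)) <= inv_pow b s n - inv_pow b s (S n).
Proof.
  unfold inv_pow. rewrite !S_INR. set (x := INR n + b).
  replace (INR n + 1 + b) with (x + 1) by (unfold x; ring).
  replace (INR n + 1 + 1 + b) with (x + 2) by (unfold x; ring).
  assert (Hx : 0 < x) by apply base_pos.
  assert (Hprod : Rpower x s * Rpower (x + 2) s <= Rpower (x + 1) s * Rpower (x + 1) s).
  { rewrite !Rpower_mult_distr by lra. apply Rle_Rpower_l; [lra | split; nra]. }
  pose proof (Rpower_pos x s). pose proof (Rpower_pos (x + 1) s).
  pose proof (Rpower_pos (x + 2) s).
  set (u := / Rpower x s). set (v := / Rpower (x + 1) s). set (w := / Rpower (x + 2) s).
  assert (Hu : 0 < u) by (apply Rinv_0_lt_compat; lra).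
  assert (Hv : 0 < v) by (apply Rinv_0_lt_compat; lra).
  assert (Hw : 0 < w) by (apply Rinv_0_lt_compat; lra).
  assert (Huw : v * v <= u * w).
  { unfold u, v, w. rewrite <- !Rinv_mult. apply Rinv_le_contravar; [nra | lra]. }
  destruct (Rle_or_lt (2 * v) (u + w)) as [Hle | Hlt]; [lra | exfalso].
  assert ((u + w) * (u + w) < (2 * v) * (2 * v)) by (apply Rmult_le_0_lt_compat; lra).
  pose proof (Rle_0_sqr (u - w)). unfold Rsqr in *. nra.
Qed.

End InvPow.

(* The mean value theorem for t |-> t^-r, obtained from 1 + y <= exp y twice. *)
Lemma inv_Rpower_succ_le (x r : R) : 0 < x -> 0 < r ->
  / Rpower (x + 1) (r + 1) <= (/ Rpower x r - / Rpower (x + 1) r) / r.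
Proof.
  intros Hx Hr.
  assert (Hln : / (x + 1) <= ln (x + 1) - ln x).
  { pose proof (exp_ineq1_le (ln (x / (x + 1)))) as Hexp.
    rewrite exp_ln, ln_div in Hexp by (try apply Rdiv_lt_0_compat; lra).
    assert (x / (x + 1) = 1 - / (x + 1)) by (field; lra). lra. }
  set (A := Rpower x r). set (B := Rpower (x + 1) r).
  assert (HA : 0 < A) by apply Rpower_pos.
  assert (HB : 0 < B) by apply Rpower_pos.
  assert (HAB : A * (1 + r / (x + 1)) <= B).
  { replace B with (A * exp (r * (ln (x + 1) - ln x)))
      by (unfold A, B, Rpower; rewrite <- exp_plus; f_equal; ring).
    apply Rmult_le_compat_l; [lra |].
    eapply Rle_trans; [| apply exp_ineq1_le].
    unfold Rdiv. apply Rplus_le_compat_l, Rmult_le_compat_l; lra. }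
  rewrite Rpower_plus, Rpower_1 by lra. fold B.
  apply (Rmult_le_reg_r (A * B * (x + 1) * r)); [repeat apply Rmult_lt_0_compat; lra |].
  replace (/ (B * (x + 1)) * (A * B * (x + 1) * r)) with (A * r) by (field; lra).
  replace ((/ A - / B) / r * (A * B * (x + 1) * r)) with ((B - A) * (x + 1)) by (field; lra).
  replace (A * (1 + r / (x + 1))) with (A + A * r / (x + 1)) in HAB by (field; lra).
  apply (Rmult_le_compat_r (x + 1)) in HAB; [| lra].
  replace ((A + A * r / (x + 1)) * (x + 1)) with (A * (x + 1) + A * r) in HAB by (field; lra).
  lra.
Qed.

Section PSeries.
Variables (b s : R).
Hypotheses (Hb : 0 < b) (Hs : 1 < s).

Let telescoping_sum :
  is_series (fun n => (inv_pow b (s - 1) n - inv_pow b (s - 1) (S n)) / (s - 1))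
            (/ Rpower b (s - 1) / (s - 1)).
Proof.
  replace (/ Rpower b (s - 1) / (s - 1)) with ((inv_pow b (s - 1) 0%nat - 0) * / (s - 1)).
  - apply is_series_scal_r, is_series_telescoping, is_lim_seq_inv_pow; lra.
  - unfold inv_pow. rewrite Rplus_0_l. unfold Rdiv. ring.
Qed.

Let inv_pow_succ_bound (n : nat) :
  0 <= inv_pow (b + 1) s n <= (inv_pow b (s - 1) n - inv_pow b (s - 1) (S n)) / (s - 1).
Proof.
  split; [left; apply inv_pow_pos |].
  unfold inv_pow. rewrite S_INR.
  replace (INR n + (b + 1)) with (INR n + b + 1) by ring.
  replace (INR n + 1 + b) with (INR n + b + 1) by ring.
  replace s with ((s - 1) + 1) at 1 by ring.
  apply inv_Rpower_succ_le; [pose proof (pos_INR n) |]; lra.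
Qed.

Lemma ex_series_inv_pow : ex_series (inv_pow b s).
Proof.
  apply (ex_series_incr_1 (inv_pow b s)).
  apply (ex_series_ext (inv_pow (b + 1) s)); [apply inv_pow_shift |].
  apply (@ex_series_le R_AbsRing R_CompleteNormedModule) with
    (fun n => (inv_pow b (s - 1) n - inv_pow b (s - 1) (S n)) / (s - 1)).
  - intros n. change (norm ?x) with (Rabs x).
    destruct (inv_pow_succ_bound n). rewrite Rabs_pos_eq; lra.
  - eexists. apply telescoping_sum.
Qed.

Lemma Series_inv_pow_succ_le : Series (inv_pow (b + 1) s) <= / Rpower b (s - 1) / (s - 1).
Proof.
  rewrite <- (is_series_unique _ _ telescoping_sum).
  apply Series_le; [apply inv_pow_succ_bound | eexists; apply telescoping_sum].
Qed.

End PSeries.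

Section NonincreasingCoefficients.
Variables (c : nat -> R) (z : R).
Hypotheses (Hc_nonneg : forall k, 0 <= c k) (Hc_succ_le : forall k, c (S k) <= c k)
  (Hc_lim : is_lim_seq c 0) (Hz : -1 <= z <= 1) (Hz1 : z = 1 -> ex_series c).

Let alternating_case : z <= 0 ->
  ex_series (fun k => z ^ k * c k) /\ c 0%nat + z * c 1%nat <= Series (fun k => z ^ k * c k).
Proof.
  intros Hz0. set (U k := (- z) ^ k * c k).
  assert (HUdec : Un_decreasing U).
  { intros k. unfold U. cbn [pow].
    assert (0 <= (- z) ^ k) by (apply pow_le; lra).
    specialize (Hc_succ_le k). specialize (Hc_nonneg (S k)).
    apply Rle_trans with ((- z) ^ k * c (S k)); [| apply Rmult_le_compat_l; lra].
    rewrite Rmult_assoc. rewrite <- (Rmult_1_l ((- z) ^ k * c (S k))) at 2.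
    apply Rmult_le_compat_r; [apply Rmult_le_pos |]; lra. }
  assert (HUlim : Un_cv U 0).
  { apply is_lim_seq_Reals, (is_lim_seq_le_le (fun _ => 0) U c);
      [| apply is_lim_seq_const | exact Hc_lim].
    intros k. unfold U. specialize (Hc_nonneg k).
    assert (0 <= (- z) ^ k) by (apply pow_le; lra).
    assert ((- z) ^ k <= 1) by (rewrite <- (pow1 k); apply pow_incr; lra).
    split; [apply Rmult_le_pos; lra |].
    rewrite <- (Rmult_1_l (c k)) at 2. apply Rmult_le_compat_r; lra. }
  destruct (alternated_series U HUdec HUlim) as [l Hl].
  pose proof (alternated_series_ineq U l 0 HUdec HUlim Hl) as [Hlow _].
  assert (Htg : forall k, tg_alt U k = z ^ k * c k).
  { intros k. unfold tg_alt, U. rewrite <- Rmult_assoc, <- Rpow_mult_distr. do 2 f_equal. ring. }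
  assert (Hsum : is_series (fun k => z ^ k * c k) l).
  { apply is_series_Reals. intros eps Heps. destruct (Hl eps Heps) as [N HN].
    exists N. intros n Hn. rewrite <- (sum_eq _ _ n (fun k _ => Htg k)). now apply HN. }
  split; [eexists; exact Hsum |].
  rewrite (is_series_unique _ _ Hsum). cbn in Hlow. rewrite !Htg in Hlow. cbn in Hlow. lra.
Qed.

Let nonneg_case : 0 <= z ->
  ex_series (fun k => z ^ k * c k) /\ c 0%nat <= Series (fun k => z ^ k * c k).
Proof.
  intros Hz0.
  assert (Hconv : ex_series (fun k => z ^ k * c k)).
  { destruct (Req_dec z 1) as [Hz_eq | Hz_lt].
    - apply (ex_series_ext c); [| exact (Hz1 Hz_eq)].
      intros k. rewrite Hz_eq, pow1. symmetry. apply Rmult_1_l.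
    - apply (@ex_series_le R_AbsRing R_CompleteNormedModule) with (fun k => z ^ k * c 0%nat).
      + intros k. change (norm ?x) with (Rabs x).
        assert (c k <= c 0%nat).
        { induction k as [|k IH]; [lra | specialize (Hc_succ_le k); lra]. }
        assert (0 <= z ^ k) by (apply pow_le; lra).
        rewrite Rabs_pos_eq by (apply Rmult_le_pos; auto).
        apply Rmult_le_compat_l; lra.
      + apply ex_series_scal_r, ex_series_geom. rewrite Rabs_pos_eq; lra. }
  split; [exact Hconv |].
  replace (c 0%nat) with (z ^ 0 * c 0%nat) by ring.
  apply (Series_ge_head (fun k => z ^ k * c k)); [exact Hconv |].
  intros k. apply Rmult_le_pos; [apply pow_le; lra | apply Hc_nonneg].
Qed.

Let pow_mul_series :
  ex_series (fun k => z ^ k * c k) /\ c 0%nat - c 1%nat <= Series (fun k => z ^ k * c k).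
Proof.
  pose proof (Hc_nonneg 1).
  destruct (Rle_or_lt z 0) as [Hz0 | Hz0].
  - destruct (alternating_case Hz0) as [Hconv Hbound]. split; [exact Hconv |].
    assert (0 <= (z + 1) * c 1%nat) by (apply Rmult_le_pos; lra). lra.
  - destruct (nonneg_case (Rlt_le _ _ Hz0)) as [Hconv Hbound]. split; [exact Hconv | lra].
Qed.

Lemma ex_series_pow_mul : ex_series (fun k => z ^ k * c k).
Proof. apply pow_mul_series. Qed.

Lemma Series_pow_mul_ge : c 0%nat - c 1%nat <= Series (fun k => z ^ k * c k).
Proof. apply pow_mul_series. Qed.

End NonincreasingCoefficients.

Lemma Phi2_inner_term_eq (s2 a z2 : R) (m k : nat) :
  Phi2_inner_term s2 a z2 m k = z2 ^ k * inv_pow (INR m + 1 + a) s2 k.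
Proof. unfold Phi2_inner_term, inv_pow, Rdiv. do 3 f_equal. ring. Qed.

Section InnerSeries.
Variables (s2 a z2 : R).
Hypotheses (Ha : 0 < a) (Hs2 : 0 < s2) (Hz2 : -1 <= z2 <= 1) (Hz2_one : z2 = 1 -> 1 < s2).

Let c (m : nat) : nat -> R := inv_pow (INR m + 1 + a) s2.

Let base_pos (m : nat) : 0 < INR m + 1 + a.
Proof. pose proof (pos_INR m). lra. Qed.

Let c_shift (m k : nat) : c (S m) k = c m (S k).
Proof. unfold c. rewrite <- inv_pow_shift, S_INR. f_equal. ring. Qed.

Let inner_eq (m : nat) : Phi2_inner s2 a z2 m = Series (fun k => z2 ^ k * c m k).
Proof. apply Series_ext, Phi2_inner_term_eq. Qed.

Let c_summable (m : nat) : z2 = 1 -> ex_series (c m).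
Proof. intros Hz. apply ex_series_inv_pow; auto. Qed.

Let c_nonneg (m k : nat) : 0 <= c m k.
Proof. left. apply inv_pow_pos. Qed.

Let c_succ_lt (m k : nat) : c m (S k) < c m k.
Proof. apply inv_pow_succ_lt; auto. Qed.

Let c_succ_le (m k : nat) : c m (S k) <= c m k.
Proof. left. apply c_succ_lt. Qed.

Let c_lim (m : nat) : is_lim_seq (c m) 0.
Proof. apply is_lim_seq_inv_pow; auto. Qed.

Let c_pow_mul_conv (m : nat) : ex_series (fun k => z2 ^ k * c m k).
Proof. apply ex_series_pow_mul; auto. Qed.

Lemma ex_series_Phi2_inner_term (m : nat) : ex_series (Phi2_inner_term s2 a z2 m).
Proof.
  apply (ex_series_ext (fun k => z2 ^ k * c m k)); [| apply c_pow_mul_conv].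
  intros k. symmetry. apply Phi2_inner_term_eq.
Qed.

Lemma Phi2_inner_pos (m : nat) : 0 < Phi2_inner s2 a z2 m.
Proof.
  rewrite inner_eq. pose proof (c_succ_lt m 0).
  apply Rlt_le_trans with (c m 0%nat - c m 1%nat); [lra |].
  apply Series_pow_mul_ge; auto.
Qed.

Lemma Phi2_inner_succ_le (m : nat) : Phi2_inner s2 a z2 (S m) <= Phi2_inner s2 a z2 m.
Proof.
  set (d k := c m k - c m (S k)).
  assert (Hshift : Phi2_inner s2 a z2 (S m) = Series (fun k => z2 ^ k * c m (S k))).
  { rewrite inner_eq. apply Series_ext. intros k. now rewrite c_shift. }
  assert (Hshift_conv : ex_series (fun k => z2 ^ k * c m (S k))).
  { apply (ex_series_ext (fun k => z2 ^ k * c (S m) k)); [| apply c_pow_mul_conv].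
    intros k. now rewrite c_shift. }
  assert (Hdiff : Phi2_inner s2 a z2 m - Phi2_inner s2 a z2 (S m)
                  = Series (fun k => z2 ^ k * d k)).
  { rewrite Hshift, inner_eq, <- Series_minus by auto.
    apply Series_ext. intros k. unfold d. ring. }
  assert (Hd_convex : forall k, d (S k) <= d k).
  { intros k. pose proof (inv_pow_convex (INR m + 1 + a) s2 (base_pos m) Hs2 k). unfold d, c. lra. }
  enough (d 0%nat - d 1%nat <= Series (fun k => z2 ^ k * d k))
    by (specialize (Hd_convex 0%nat); lra).
  apply Series_pow_mul_ge; auto.
  - intros k. pose proof (c_succ_le m k). unfold d. lra.
  - replace (Finite 0) with (Finite (0 - 0)) by (f_equal; ring).
    apply is_lim_seq_minus'; [| apply (is_lim_seq_incr_1 (c m))]; apply c_lim.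
  - intros Hz. pose proof (c_summable m Hz) as Hc.
    exact (ex_series_minus _ _ Hc (proj1 (ex_series_incr_1 (c m)) Hc)).
Qed.

Lemma Phi2_inner_le_first (m : nat) : Phi2_inner s2 a z2 m <= Phi2_inner s2 a z2 0.
Proof.
  induction m as [|m IH]; [lra |].
  apply Rle_trans with (Phi2_inner s2 a z2 m); [apply Phi2_inner_succ_le | exact IH].
Qed.

End InnerSeries.

Lemma Phi2_inner_one_le (s2 a : R) (m : nat) : 0 < a -> 1 < s2 ->
  Phi2_inner s2 a 1 m <= inv_pow a (s2 - 1) m / (s2 - 1).
Proof.
  intros Ha Hs2.
  assert (Hbase : 0 < INR m + a) by (pose proof (pos_INR m); lra).
  unfold Phi2_inner. rewrite (Series_ext _ (inv_pow (INR m + a + 1) s2)).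
  - apply Series_inv_pow_succ_le; assumption.
  - intros k. rewrite Phi2_inner_term_eq, pow1, Rmult_1_l. f_equal. ring.
Qed.

Definition Phi2_weight (s1 s2 a z2 : R) (m : nat) : R :=
  inv_pow a s1 m * Phi2_inner s2 a z2 m.

Lemma Phi2_outer_term_eq (s1 s2 a z1 z2 : R) (m : nat) :
  Phi2_outer_term s1 s2 a z1 z2 m = z1 ^ m * Phi2_weight s1 s2 a z2 m.
Proof. unfold Phi2_outer_term, Phi2_weight, inv_pow, Rdiv. ring. Qed.

Section OuterSeries.
Variables (s1 s2 a z2 : R).
Hypotheses (Ha : 0 < a) (Hs1 : 0 < s1) (Hs2 : 0 < s2) (Hz2 : -1 <= z2 <= 1)
  (Hz2_one : z2 = 1 -> 1 < s2).

Lemma Phi2_weight_pos (m : nat) : 0 < Phi2_weight s1 s2 a z2 m.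
Proof. apply Rmult_lt_0_compat; [apply inv_pow_pos | apply Phi2_inner_pos]; auto. Qed.

Lemma Phi2_weight_succ_lt (m : nat) : Phi2_weight s1 s2 a z2 (S m) < Phi2_weight s1 s2 a z2 m.
Proof.
  pose proof (Phi2_inner_pos s2 a z2 Ha Hs2 Hz2 Hz2_one (S m)).
  pose proof (Phi2_inner_succ_le s2 a z2 Ha Hs2 Hz2 Hz2_one m).
  pose proof (inv_pow_pos a s1 (S m)). pose proof (inv_pow_succ_lt a s1 Ha Hs1 m).
  unfold Phi2_weight.
  apply Rle_lt_trans with (inv_pow a s1 (S m) * Phi2_inner s2 a z2 m).
  - apply Rmult_le_compat_l; lra.
  - apply Rmult_lt_compat_r; lra.
Qed.

Lemma Phi2_weight_le (m : nat) :
  Phi2_weight s1 s2 a z2 m <= inv_pow a s1 m * Phi2_inner s2 a z2 0.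
Proof.
  apply Rmult_le_compat_l; [left; apply inv_pow_pos | apply Phi2_inner_le_first; auto].
Qed.

Lemma is_lim_seq_Phi2_weight : is_lim_seq (Phi2_weight s1 s2 a z2) 0.
Proof.
  apply (is_lim_seq_le_le (fun _ => 0) _ (fun m => inv_pow a s1 m * Phi2_inner s2 a z2 0)).
  - intros m. split; [left; apply Phi2_weight_pos | apply Phi2_weight_le].
  - apply is_lim_seq_const.
  - replace (Finite 0) with (Rbar_mult 0 (Phi2_inner s2 a z2 0)) by (cbn; f_equal; ring).
    apply is_lim_seq_scal_r, is_lim_seq_inv_pow; assumption.
Qed.

Lemma Phi2_converges_pos (z1 : R) : -1 <= z1 <= 1 ->
  (z1 = 1 -> ex_series (Phi2_weight s1 s2 a z2)) ->
  Phi2_converges s1 s2 a z1 z2 /\ 0 < Phi2 s1 s2 a z1 z2.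
Proof.
  intros Hz1 Hz1_one.
  assert (Hconv : ex_series (Phi2_outer_term s1 s2 a z1 z2)).
  { apply (ex_series_ext (fun m => z1 ^ m * Phi2_weight s1 s2 a z2 m));
      [intros m; symmetry; apply Phi2_outer_term_eq |].
    apply ex_series_pow_mul; auto using is_lim_seq_Phi2_weight.
    all: intros m; left; auto using Phi2_weight_pos, Phi2_weight_succ_lt. }
  split; [split; [apply ex_series_Phi2_inner_term; auto | exact Hconv] |].
  unfold Phi2. rewrite (Series_ext _ _ (Phi2_outer_term_eq s1 s2 a z1 z2)).
  pose proof (Phi2_weight_succ_lt 0).
  apply Rlt_le_trans with (Phi2_weight s1 s2 a z2 0 - Phi2_weight s1 s2 a z2 1); [lra |].
  apply Series_pow_mul_ge; auto using is_lim_seq_Phi2_weight.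
  all: intros m; left; auto using Phi2_weight_pos, Phi2_weight_succ_lt.
Qed.

End OuterSeries.

Lemma ex_series_Phi2_weight_gt1 (s1 s2 a z2 : R) : 0 < a -> 1 < s1 -> 0 < s2 ->
  -1 <= z2 <= 1 -> (z2 = 1 -> 1 < s2) -> ex_series (Phi2_weight s1 s2 a z2).
Proof.
  intros Ha Hs1 Hs2 Hz2 Hz2_one.
  apply (@ex_series_le R_AbsRing R_CompleteNormedModule) with
    (fun m => inv_pow a s1 m * Phi2_inner s2 a z2 0).
  - intros m. change (norm ?x) with (Rabs x).
    rewrite Rabs_pos_eq by (left; apply Phi2_weight_pos; auto; lra).
    apply Phi2_weight_le; auto.
  - apply ex_series_scal_r, ex_series_inv_pow; assumption.
Qed.

(* For z2 = 1 the inner sum is itself O((m + a)^(1 - s2)), which lowers the requirement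
   on s1 to s1 + s2 > 2. *)
Lemma ex_series_Phi2_weight_one (s1 s2 a : R) : 0 < a -> 0 < s1 -> 1 < s2 -> 2 < s1 + s2 ->
  ex_series (Phi2_weight s1 s2 a 1).
Proof.
  intros Ha Hs1 Hs2 Hs12.
  apply (@ex_series_le R_AbsRing R_CompleteNormedModule) with
    (fun m => inv_pow a (s1 + (s2 - 1)) m * / (s2 - 1)).
  - intros m. change (norm ?x) with (Rabs x).
    rewrite Rabs_pos_eq by (left; apply Phi2_weight_pos; auto; lra).
    unfold Phi2_weight, inv_pow. rewrite Rpower_plus, Rinv_mult, Rmult_assoc.
    apply Rmult_le_compat_l; [left; apply Rinv_0_lt_compat, Rpower_pos |].
    apply Phi2_inner_one_le; assumption.
  - apply ex_series_scal_r, ex_series_inv_pow; lra.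
Qed.

Theorem lemma3p7 (a : R) (ha : 0 < a <= 1) :
  (forall s1 s2 : R, 0 < s1 -> 1 < s2 -> 2 < s1 + s2 ->
     Phi2_converges s1 s2 a 1 1 /\ 0 < Phi2 s1 s2 a 1 1) /\
  (forall z2 : R, -1 <= z2 < 1 -> z2 <> 0 ->
   forall s1 s2 : R, 1 < s1 -> 0 < s2 ->
     Phi2_converges s1 s2 a 1 z2 /\ 0 < Phi2 s1 s2 a 1 z2) /\
  (forall z1 : R, -1 <= z1 < 1 -> z1 <> 0 ->
   forall s1 s2 : R, 0 < s1 -> 1 < s2 ->
     Phi2_converges s1 s2 a z1 1 /\ 0 < Phi2 s1 s2 a z1 1) /\
  (forall z1 z2 : R, -1 <= z1 < 1 -> z1 <> 0 -> -1 <= z2 < 1 -> z2 <> 0 ->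
   forall s1 s2 : R, 0 < s1 -> 0 < s2 ->
     Phi2_converges s1 s2 a z1 z2 /\ 0 < Phi2 s1 s2 a z1 z2).
Proof.
  destruct ha as [Ha _].
  split; [| split; [| split]].
  - intros s1 s2 Hs1 Hs2 Hs12.
    apply Phi2_converges_pos; try lra.
    intros _. apply ex_series_Phi2_weight_one; assumption.
  - intros z2 Hz2 _ s1 s2 Hs1 Hs2.
    apply Phi2_converges_pos; try lra.
    intros _. apply ex_series_Phi2_weight_gt1; lra.
  - intros z1 Hz1 _ s1 s2 Hs1 Hs2.
    apply Phi2_converges_pos; lra.
  - intros z1 z2 Hz1 _ Hz2 _ s1 s2 Hs1 Hs2.
    apply Phi2_converges_pos; lra.
Qed.
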